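(* Let $\phi$ be a reduced Boolean formula in the variables $x_1,\dots,x_n$ defining a set $S \subseteq \{0,1\}^n$, and let $Q \subseteq [0,1]^n$ be any convex set containing $S$. If $Q$ satisfies all inequalities of notch at most $\nu$ that are valid for $S$, then $\phi(Q)$ satisfies all inequalities of notch at most $\nu+1$ that are valid for $S$. Moreover, if $Q$ is a polytope defined by an extended formulation of size $\sigma$, then $\phi(Q)$ is a polytope that can be defined by an extended formulation of size $|\phi|\sigma$.
   Context: Boolean formulas are built from input variables $x_1,\dots,x_n$ using $\wedge$, $\vee$, $\neg$, interpreted as functions $\{0,1\}^n\to\{0,1\}$; $\phi$ defines $S=\{x\in\{0,1\}^n:\phi(x)=1\}$. A formula is reduced if negations apply only to input variables. The size $|\phi|$ is the total number of occurrences of input variables. For a reduced $\phi$ and convex $Q\subseteq[0,1]^n$, $\phi(Q)$ is defined recursively: $x_i$ is replaced by $\{x \in Q : x_i = 1\}$; $\neg x_i$ by $\{x \in Q : x_i = 0\}$; a conjunction by the intersection of the corresponding sets; a disjunction by the convex hull of the union of the corresponding sets. An inequality in standard form is $\sum_{i \in I^+} c_i x_i + \sum_{i\in I^-} c_i(1-x_i) \ge \delta$ where $I^+,I^-$ partition $[n]$, $c \in \mathbb{R}^n_{\ge 0}$, $\delta\ge 0$ (every linear inequality can be written with such $I^\pm$, $c$, and the considered ones have $\delta \ge 0$). Its notch is the smallest number $\nu$ such that $\sum_{j\in J} c_j\ge\delta$ for every $J\subseteq[n]$ with $|J|\ge \nu$. An extended formulation of size $m$ of a polytope $P\subseteq\mathbb{R}^n$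 is a description $P=\{x:\exists y\in\mathbb{R}^d,\ Ay\ge b,\ x=Ty+t\}$ with $A$ having $m$ rows. *)

From HB Require Import structures.
From mathcomp Require Import all_boot all_order all_algebra.
From mathcomp Require Import reals.

Set Implicit Arguments.
Unset Strict Implicit.
Unset Printing Implicit Defensive.

Import Order.TTheory GRing.Theory Num.Theory.
Local Open Scope ring_scope.

(* Boolean formulas over variables x_0, ..., x_{n-1} (paper: x_1..x_n). *)
Inductive formula (n : nat) : Type :=
  | FVar of 'I_n
  | FNeg of formula n
  | FAnd of formula n & formula n
  | FOr of formula n & formula n.

Arguments FVar {n}.
Arguments FNeg {n}.
Arguments FAnd {n}.
Arguments FOr {n}.

Fixpoint feval (n : nat) (phi : formula n) (b : 'I_n -> bool) : bool :=
  match phi with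
  | FVar i => b i
  | FNeg p => ~~ feval p b
  | FAnd p q => feval p b && feval q b
  | FOr p q => feval p b || feval q b
  end.

Fixpoint reduced (n : nat) (phi : formula n) : Prop :=
  match phi with
  | FVar _ => True
  | FNeg p => match p with FVar _ => True | _ => False end
  | FAnd p q => reduced p /\ reduced q
  | FOr p q => reduced p /\ reduced q
  end.

Fixpoint fsize (n : nat) (phi : formula n) : nat :=
  match phi with
  | FVar _ => 1
  | FNeg p => fsize p
  | FAnd p q => fsize p + fsize q
  | FOr p q => fsize p + fsize q
  end.

Section Geometry.
Variable R : realType.
Variable n : nat.

Definition pt := 'cV[R]_n.
Definition pset := pt -> Prop.

Definition coord (x : pt) (i : 'I_n) : R := x i ord0.

Definition formula_set (phi : formula n) : pset :=
  fun x => (forall i, coord x i = 0 \/ coord x i = 1) /\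
           feval phi (fun i => coord x i == 1).

Definition set_incl (A B : pset) : Prop := forall x, A x -> B x.

Definition in_unit_cube (Q : pset) : Prop :=
  forall x, Q x -> forall i, 0 <= coord x i <= 1.

Definition convex (Q : pset) : Prop :=
  forall x y (t : R), Q x -> Q y -> 0 <= t <= 1 -> Q (t *: x + (1 - t) *: y).

Definition conv (A : pset) : pset :=
  fun x => exists (k : nat) (p : 'I_k -> pt) (w : 'I_k -> R),
    (forall j, A (p j)) /\ (forall j, 0 <= w j) /\
    \sum_(j < k) w j = 1 /\ x = \sum_(j < k) w j *: p j.

(* phi(Q), defined recursively for reduced formulas (the value on a
   negation of a non-variable is irrelevant: such formulas are not reduced). *)
Fixpoint phiQ (Q : pset) (phi : formula n) : pset :=
  match phi with
  | FVar i => fun x => Q x /\ coord x i = 1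
  | FNeg p => match p with
              | FVar i => fun x => Q x /\ coord x i = 0
              | _ => fun _ => False
              end
  | FAnd p q => fun x => phiQ Q p x /\ phiQ Q q x
  | FOr p q => conv (fun x => phiQ Q p x \/ phiQ Q q x)
  end.

(* Standard-form inequality, given by s (s i = true iff i in I^+), the
   coefficients c >= 0 and right-hand side delta >= 0:
     sum_{i in I^+} c_i x_i + sum_{i in I^-} c_i (1 - x_i) >= delta. *)
Definition sf_lhs (s : 'I_n -> bool) (c : 'I_n -> R) (x : pt) : R :=
  \sum_(i < n) (if s i then c i * coord x i else c i * (1 - coord x i)).

Definition sf_satisfies (s : 'I_n -> bool) (c : 'I_n -> R) (delta : R)
  (x : pt) : Prop := delta <= sf_lhs s c x.

Definition valid_for (S : pset) s c delta : Prop :=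
  forall x, S x -> sf_satisfies s c delta x.

Definition notch_prop (c : 'I_n -> R) (delta : R) : pred nat :=
  fun nu => [forall J : {set 'I_n}, (nu <= #|J|)%N ==> (delta <= \sum_(j in J) c j)].

Lemma notch_exists (c : 'I_n -> R) (delta : R) : exists nu, notch_prop c delta nu.
Proof.
exists n.+1; apply/forallP => J; apply/implyP => HJ.
by move: (max_card J); rewrite card_ord => /(leq_trans HJ); rewrite ltnn.
Qed.

Definition notch (c : 'I_n -> R) (delta : R) : nat := ex_minn (notch_exists c delta).

Definition satisfies_notch_valid (Q S : pset) (nu : nat) : Prop :=
  forall (s : 'I_n -> bool) (c : 'I_n -> R) (delta : R),
    (forall i, 0 <= c i) -> 0 <= delta ->
    (notch c delta <= nu)%N -> valid_for S s c delta ->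
    forall x, Q x -> sf_satisfies s c delta x.

Definition polytope (P : pset) : Prop :=
  exists (k : nat) (p : 'I_k -> pt),
    forall x, P x <-> conv (fun z => exists j, z = p j) x.

Definition has_ext_form (P : pset) (m : nat) : Prop :=
  exists (d : nat) (A : 'M[R]_(m, d)) (b : 'cV[R]_m) (T : 'M[R]_(n, d)) (t : pt),
    forall x, P x <-> exists y : 'cV[R]_d,
      (forall i : 'I_m, b i ord0 <= (A *m y) i ord0) /\ x = T *m y + t.

End Geometry.

(* Let x0 be the 0/1 point at which every literal of a valid
   inequality of notch at most nu + 1 is false, so that its left side vanishes
   at x0.  If phi(x0) = 1 then delta <= 0 and the inequality holds on the whole
   cube.  Otherwise, by induction on phi, every point of phi(Q) is a convex
   combination of points of Q at which some literal of the inequality equals 1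
   (a leaf of phi that is false at x0 forces this).  At such a point the
   inequality follows from the valid inequality obtained by complementing that
   literal and replacing its coefficient c_i by delta - c_i; its notch is at
   most nu, so Q satisfies it.

   Write each phi(Q) in homogenized form {T y : A y >= 0, E y = 0,
   l y = 1} over a cone on which l >= 0 and T vanishes where l does.  A leaf
   {x in Q : x_i = b} needs the sigma inequalities of Q; a conjunction stacks
   the two systems and equates their images; a disjunction takes the direct
   sum of the two cones (Balas).  The equations
   are eliminated at the end by parametrizing their kernel, and the set is a
   polytope: the convex hull of the images of its basic solutions, of which
   there is at most one per set of tight rows. *)

From Pilot Require Import Defs.
From HB Require Import structures.
From mathcomp Require Import all_boot all_order all_algebra.
From mathcomp Require Import reals boolp.
From mathcomp Require Import ring lra zify.

Set Implicit Arguments.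
Unset Strict Implicit.
Unset Printing Implicit Defensive.

Import Order.TTheory GRing.Theory Num.Theory.
Local Open Scope ring_scope.

Local Notation coord := Defs.coord.

Section Notch.
Variables (R : realType) (n : nat).
Implicit Types (s : 'I_n -> bool) (c : 'I_n -> R) (d : R) (x y z : pt R n).
Implicit Types (S Q : pset R n).

Definition lit s i x : R := if s i then coord x i else 1 - coord x i.

Definition binary S := forall z, S z -> forall i, coord z i = 0 \/ coord z i = 1.

Lemma sf_lhs_lit s c x : sf_lhs s c x = \sum_i c i * lit s i x.
Proof. by apply: eq_bigr => i _; rewrite /lit; case: (s i). Qed.

Lemma lit_ge0 s i x : 0 <= coord x i <= 1 -> 0 <= lit s i x.
Proof. by case/andP; rewrite /lit; case: (s i) => // _; rewrite subr_ge0. Qed.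

Lemma sf_lhs_ge0 s c x : (forall i, 0 <= c i) ->
  (forall i, 0 <= coord x i <= 1) -> 0 <= sf_lhs s c x.
Proof.
move=> c_ge0 x01; rewrite sf_lhs_lit; apply: sumr_ge0 => i _.
exact/mulr_ge0/lit_ge0.
Qed.

Lemma sf_lhs_affine s c k (w : 'I_k -> R) (p : 'I_k -> pt R n) :
  \sum_j w j = 1 -> sf_lhs s c (\sum_j w j *: p j) = \sum_j w j * sf_lhs s c (p j).
Proof.
move=> w1; rewrite sf_lhs_lit.
transitivity (\sum_i \sum_j w j * (c i * lit s i (p j))).
  apply: eq_bigr => i _; rewrite /lit /Defs.coord summxE; case: (s i).
    by rewrite mulr_sumr; apply: eq_bigr => j _; rewrite mxE mulrCA.
  rewrite -{1}w1 -sumrB mulr_sumr; apply: eq_bigr => j _.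
  by rewrite mxE -{1}(mulr1 (w j)) -mulrBr mulrCA.
by rewrite exchange_big; apply: eq_bigr => j _; rewrite sf_lhs_lit mulr_sumr.
Qed.

Lemma sf_lhs_conv s c d (B : pset R n) x :
  (forall z, B z -> d <= sf_lhs s c z) -> conv B x -> d <= sf_lhs s c x.
Proof.
move=> dB [k [p [w [Bp [w_ge0 [w1 ->]]]]]].
rewrite sf_lhs_affine // -[d]mul1r -w1 mulr_suml; apply: ler_sum => j _.
by apply: ler_wpM2l; [exact: w_ge0 | exact/dB/Bp].
Qed.

Lemma notchP c d : notch_prop c d (notch c d).
Proof. by rewrite /notch; case: ex_minnP. Qed.

Lemma notch_min c d m : notch_prop c d m -> (notch c d <= m)%N.
Proof. by rewrite /notch; case: ex_minnP => k _; apply. Qed.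

Definition flip_lit s i j := if j == i then ~~ s i else s j.
Definition lower_coef c d i j := if j == i then d - c i else c j.

Lemma lower_coef_ge0 c d i j : (forall j, 0 <= c j) -> c i <= d ->
  0 <= lower_coef c d i j.
Proof. by rewrite /lower_coef; case: (j == i); rewrite ?subr_ge0. Qed.

Lemma sf_lhs_flip s c d i z : sf_lhs (flip_lit s i) (lower_coef c d i) z =
  sf_lhs s c z - c i * lit s i z + (d - c i) * (1 - lit s i z).
Proof.
have split_i s' c' : sf_lhs s' c' z =
    c' i * lit s' i z + \sum_(j < n | j != i) c' j * lit s' j z.
  by rewrite sf_lhs_lit (bigD1 i).
rewrite !split_i {1}/lower_coef eqxx.
have -> : lit (flip_lit s i) i z = 1 - lit s i z.
  by rewrite /lit /flip_lit eqxx; case: (s i); rewrite ?subKr.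
have -> : \sum_(j < n | j != i) lower_coef c d i j * lit (flip_lit s i) j z =
          \sum_(j < n | j != i) c j * lit s j z.
  by apply: eq_bigr => j /negbTE ji; rewrite /lower_coef /lit /flip_lit ji.
ring.
Qed.

Lemma notch_lower c d nu i : (forall j, 0 <= c j) -> c i <= d ->
  (notch c d <= nu.+1)%N -> (notch (lower_coef c d i) (d - c i) <= nu)%N.
Proof.
move=> c_ge0 cid notch_le; apply: notch_min; apply/forallP => J; apply/implyP => nuJ.
have [iJ|iNJ] := boolP (i \in J).
  rewrite (bigD1 i) //= {1}/lower_coef eqxx lerDl.
  by apply: sumr_ge0 => j _; exact: lower_coef_ge0.
have := forallP (notchP c d) (i |: J); rewrite cardsU1 iNJ add1n.
have nuJ' : (nu.+1 <= #|J|.+1)%N by rewrite ltnS.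
move/implyP/(_ (leq_trans notch_le nuJ')); rewrite big_setU1 //=.
have -> : \sum_(j in J) lower_coef c d i j = \sum_(j in J) c j.
  apply: eq_bigr => j jJ; rewrite /lower_coef; case: eqP => // ji.
  by move: iNJ; rewrite -ji jJ.
lra.
Qed.

Lemma valid_flip S s c d i : binary S -> (forall j, 0 <= c j) ->
  valid_for S s c d -> valid_for S (flip_lit s i) (lower_coef c d i) (d - c i).
Proof.
move=> S01 c_ge0 Sval z Sz; rewrite /sf_satisfies sf_lhs_flip.
have z01 j : 0 <= coord z j <= 1.
  by case: (S01 z Sz j) => ->; rewrite ?lexx ?ler01.
have := sf_lhs_ge0 s c_ge0 z01; have := Sval z Sz; rewrite /sf_satisfies.
have : lit s i z = 0 \/ lit s i z = 1.
  by rewrite /lit; case: (s i); case: (S01 z Sz i) => ->; rewrite ?subrr ?subr0; auto.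
by case=> ->; lra.
Qed.

(* If [d <= c i], the inequality follows from the one with literal [i]
   complemented and [c i] replaced by [d - c i], which has notch at most [nu]. *)
Lemma sf_satisfies_at_true_lit Q S nu s c d i y :
  satisfies_notch_valid Q S nu -> binary S -> (forall j, 0 <= c j) -> 0 <= d ->
  (notch c d <= nu.+1)%N -> valid_for S s c d ->
  Q y -> (forall j, 0 <= coord y j <= 1) -> lit s i y = 1 -> sf_satisfies s c d y.
Proof.
move=> Qnu S01 c_ge0 d_ge0 notch_le Sval Qy y01 yi.
have [cid|dci] := lerP (c i) d; last first.
  rewrite /sf_satisfies sf_lhs_lit (bigD1 i) //= yi mulr1.
  apply: le_trans (ltW dci) _; rewrite lerDl.
  by apply: sumr_ge0 => j _; exact/mulr_ge0/lit_ge0.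
have d'_ge0 : 0 <= d - c i by rewrite subr_ge0.
have := Qnu _ _ _ (fun j => lower_coef_ge0 j c_ge0 cid) d'_ge0
  (notch_lower c_ge0 cid notch_le) (valid_flip i S01 c_ge0 Sval) y Qy.
by rewrite /sf_satisfies sf_lhs_flip yi; lra.
Qed.

Lemma feval_ext (psi : formula n) (b1 b2 : 'I_n -> bool) :
  b1 =1 b2 -> feval psi b1 = feval psi b2.
Proof. by move=> b12; elim: psi => //= [p ->|p -> q ->|p -> q ->]. Qed.

Lemma phiQ_sf_lhs_ge0 Q s c (psi : formula n) y :
  in_unit_cube Q -> (forall j, 0 <= c j) -> phiQ Q psi y -> 0 <= sf_lhs s c y.
Proof.
move=> Q01 c_ge0; elim: psi y => [i|p _|p IHp q IHq|p IHp q IHq] y /=.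
- by case=> Qy _; apply: sf_lhs_ge0 => // j; exact: Q01.
- case: p => // i [Qy _]; apply: sf_lhs_ge0 => // j; exact: Q01.
- by case=> /IHp.
- by apply: sf_lhs_conv => z [/IHp|/IHq].
Qed.

(* [~~ s] is the 0/1 point at which every literal of the inequality is false. *)
Lemma phiQ_satisfies_of_falsified Q S nu s c d :
  satisfies_notch_valid Q S nu -> in_unit_cube Q -> binary S ->
  (forall j, 0 <= c j) -> 0 <= d -> (notch c d <= nu.+1)%N -> valid_for S s c d ->
  forall (psi : formula n) y, ~~ feval psi (fun i => ~~ s i) ->
  phiQ Q psi y -> sf_satisfies s c d y.
Proof.
move=> Qnu Q01 S01 c_ge0 d_ge0 notch_le Sval.
elim=> [i|p _|p IHp q IHq|p IHp q IHq] y /=.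
- move=> /negPn si [Qy yi]; apply: (sf_satisfies_at_true_lit (i := i) Qnu) => //.
    exact: Q01.
  by rewrite /lit si.
- case: p => //= i /negPn/negbTE si [Qy yi].
  apply: (sf_satisfies_at_true_lit (i := i) Qnu) => //.
    exact: Q01.
  by rewrite /lit si yi subr0.
- by rewrite negb_and => /orP[np|nq] [yp yq]; [exact: IHp | exact: IHq].
- by rewrite negb_or => /andP[np nq]; apply: sf_lhs_conv => z [];
    [exact: IHp | exact: IHq].
Qed.

Lemma phiQ_notch (phi : formula n) Q : in_unit_cube Q -> forall nu,
  satisfies_notch_valid Q (formula_set phi) nu ->
  satisfies_notch_valid (phiQ Q phi) (formula_set phi) nu.+1.
Proof.
move=> Q01 nu Qnu s c d c_ge0 d_ge0 notch_le Sval x phix.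
have S01 : binary (formula_set phi) by move=> z [].
have [phiv|] := boolP (feval phi (fun i => ~~ s i)); last first.
  by move=> phiNv; exact: (phiQ_satisfies_of_falsified Qnu Q01 S01 c_ge0 d_ge0
    notch_le Sval phiNv phix).
pose v : pt R n := \col_i (if s i then 0 else 1).
have v_coord i : coord v i = if s i then 0 else 1 by rewrite /Defs.coord mxE.
have Sv : formula_set phi v.
  split=> [i|]; first by rewrite v_coord; case: (s i); [left|right].
  rewrite (feval_ext _ (b2 := fun i => ~~ s i)) // => i.
  by rewrite v_coord; case: (s i); rewrite /= ?(eq_sym 0) ?oner_eq0 ?eqxx.
have v0 : sf_lhs s c v = 0.
  by rewrite /sf_lhs big1 // => i _; rewrite v_coord; case: (s i); rewrite ?subrr mulr0.
apply: le_trans (Sval v Sv) _; rewrite /sf_satisfies v0.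
exact: phiQ_sf_lhs_ge0 phix.
Qed.

End Notch.

Section MatrixFacts.

Lemma subr_eq0P (V : zmodType) (a b : V) : a - b = 0 <-> a = b.
Proof. by split=> [/eqP|->]; [rewrite subr_eq0 => /eqP | rewrite subrr]. Qed.

Lemma mxDE (V : nmodType) m p (M N : 'M[V]_(m, p)) i j : (M + N) i j = M i j + N i j.
Proof. by rewrite mxE. Qed.

Lemma mxNE (V : zmodType) m p (M : 'M[V]_(m, p)) i j : (- M) i j = - M i j.
Proof. by rewrite mxE. Qed.

Lemma mxBE (V : zmodType) m p (M N : 'M[V]_(m, p)) i j : (M - N) i j = M i j - N i j.
Proof. by rewrite mxDE mxNE. Qed.

Lemma mxZE (R : pzRingType) m p a (M : 'M[R]_(m, p)) i j : (a *: M) i j = a * M i j.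
Proof. by rewrite mxE. Qed.

Lemma mx11_eqP (V : nmodType) (M N : 'M[V]_1) : M = N <-> M ord0 ord0 = N ord0 ord0.
Proof. by split=> [->|MN] //; rewrite [M]mx11_scalar [N]mx11_scalar MN. Qed.

Lemma col_mx_eq0P (V : nmodType) m1 m2 p (u : 'M[V]_(m1, p)) (v : 'M[V]_(m2, p)) :
  col_mx u v = 0 <-> u = 0 /\ v = 0.
Proof.
split=> [/eqP|[-> ->]]; last by rewrite col_mx0.
by rewrite col_mx_eq0 => /andP[/eqP -> /eqP ->].
Qed.

Lemma mul_block_diag_col (R : pzSemiRingType) m1 m2 d1 d2 p
    (A1 : 'M[R]_(m1, d1)) (A2 : 'M[R]_(m2, d2))
    (y1 : 'M[R]_(d1, p)) (y2 : 'M[R]_(d2, p)) :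
  block_mx A1 0 0 A2 *m col_mx y1 y2 = col_mx (A1 *m y1) (A2 *m y2).
Proof. by rewrite mul_block_col !mul0mx addr0 add0r. Qed.

End MatrixFacts.

Section ConeForm.
Variables (R : realType) (n : nat).

Definition nonneg m (v : 'cV[R]_m) := forall i, 0 <= v i ord0.
Definition lin d (l : 'rV[R]_d) (y : 'cV[R]_d) : R := (l *m y) ord0 ord0.

(* Only the rows of [A] count towards the size; the equations [E] are free. *)
Definition cone_lift d m k (A : 'M[R]_(m, d)) (E : 'M[R]_(k, d)) (l : 'rV[R]_d)
  (T : 'M[R]_(n, d)) : pset R n :=
  fun x => exists y, [/\ nonneg (A *m y), E *m y = 0, lin l y = 1 & x = T *m y].

(* The cone has no direction escaping to infinity: this is what makes the
   slice [l y = 1] of the sum of two cones the convex hull of the union. *)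
Definition bounded_cone d m k (A : 'M[R]_(m, d)) (E : 'M[R]_(k, d))
  (l : 'rV[R]_d) (T : 'M[R]_(n, d)) :=
  forall y, nonneg (A *m y) -> E *m y = 0 ->
  0 <= lin l y /\ (lin l y = 0 -> T *m y = 0).

Definition cone_form (P : pset R n) m := exists d (A : 'M[R]_(m, d)) k
  (E : 'M[R]_(k, d)) l T, (forall x, P x <-> cone_lift A E l T x) /\ bounded_cone A E l T.

Lemma linD d (l : 'rV[R]_d) y z : lin l (y + z) = lin l y + lin l z.
Proof. by rewrite /lin mulmxDr mxE. Qed.

Lemma linZ d (l : 'rV[R]_d) a y : lin l (a *: y) = a * lin l y.
Proof. by rewrite /lin -scalemxAr mxE. Qed.

Lemma linN d (l : 'rV[R]_d) y : lin l (- y) = - lin l y.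
Proof. by rewrite /lin mulmxN mxE. Qed.

Lemma lin0l d (y : 'cV[R]_d) : lin 0 y = 0.
Proof. by rewrite /lin mul0mx mxE. Qed.

Lemma lin0r d (l : 'rV[R]_d) : lin l 0 = 0.
Proof. by rewrite /lin mulmx0 mxE. Qed.

Lemma lin_row_col d1 d2 (l1 : 'rV[R]_d1) (l2 : 'rV[R]_d2) y1 y2 :
  lin (row_mx l1 l2) (col_mx y1 y2) = lin l1 y1 + lin l2 y2.
Proof. by rewrite /lin mul_row_col mxE. Qed.

Lemma nonneg_col_mx m1 m2 (u : 'cV[R]_m1) (v : 'cV[R]_m2) :
  nonneg (col_mx u v) <-> nonneg u /\ nonneg v.
Proof.
split=> [uv|[u_ge0 v_ge0] i]; first split=> i.
- by have := uv (lshift m2 i); rewrite col_mxEu.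
- by have := uv (rshift m1 i); rewrite col_mxEd.
by rewrite -(splitK i); case: (split i) => j /=; rewrite ?col_mxEu ?col_mxEd.
Qed.

Lemma cone_form_ext (P P' : pset R n) m :
  (forall x, P x <-> P' x) -> cone_form P m -> cone_form P' m.
Proof.
move=> PP' [d [A [k [E [l [T [PA bA]]]]]]].
by exists d, A, k, E, l, T; split => // x; rewrite -PP'.
Qed.

Lemma conv_cone_lift d m k (A : 'M[R]_(m, d)) (E : 'M[R]_(k, d)) l T
  (B : pset R n) x :
  (forall z, B z -> cone_lift A E l T z) -> conv B x -> cone_lift A E l T x.
Proof.
move=> BA [K [p [w [Bp [w_ge0 [w1 ->]]]]]].
have [f fP] := choice (fun j => BA _ (Bp j)).
exists (\sum_j w j *: f j); split.
- move=> i; rewrite mulmx_sumr summxE; apply: sumr_ge0 => j _.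
  by rewrite -scalemxAr mxE; apply: mulr_ge0 => //; case: (fP j).
- by rewrite mulmx_sumr big1 // => j _; rewrite -scalemxAr; case: (fP j) => _ -> _ _;
    rewrite scaler0.
- rewrite /lin mulmx_sumr summxE -w1; apply: eq_bigr => j _.
  by rewrite -scalemxAr mxE; case: (fP j) => _ _ + _; rewrite /lin => ->; rewrite mulr1.
- rewrite mulmx_sumr; apply: eq_bigr => j _.
  by rewrite -scalemxAr; case: (fP j) => _ _ _ <-.
Qed.

Lemma conv_mem (P : pset R n) x : P x -> conv P x.
Proof.
move=> Px; exists 1%N, (fun _ => x), (fun _ => 1).
by rewrite !big_ord1 scale1r.
Qed.

Lemma conv_comb2 (P : pset R n) x1 x2 a b :
  P x1 -> P x2 -> 0 <= a -> 0 <= b -> a + b = 1 ->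
  conv P (a *: x1 + b *: x2).
Proof.
move=> P1 P2 a_ge0 b_ge0 ab1.
exists 2%N, (fun j : 'I_2 => if j == ord0 then x1 else x2),
  (fun j : 'I_2 => if j == ord0 then a else b).
split; first by move=> j; case: (j == ord0).
split; first by move=> j; case: (j == ord0).
by rewrite !big_ord_recl !big_ord0 /= !addr0.
Qed.

Lemma cone_form_empty m : cone_form (fun _ => False) m.
Proof.
exists 1%N, 0, 0%N, 0, 0, 0; split=> [x|y _ _]; last by rewrite lin0l mul0mx.
split=> // -[y [_ _]]; rewrite lin0l => /eqP; by rewrite eq_sym oner_eq0.
Qed.

Lemma cone_form_point m (p : pt R n) : (0 < m)%N -> cone_form (fun x => x = p) m.
Proof.
move=> m_gt0.
exists 1%N, (const_mx 1 : 'M[R]_(m, 1)), 0%N, 0, (1 : 'M[R]_1), (p : 'M[R]_(n, 1)).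
have lin1 (y : 'cV[R]_1) : lin 1 y = y ord0 ord0 by rewrite /lin mul1mx.
split=> [x|y y_ge0 _].
  split=> [->|[y [_ _ y1 ->]]].
    exists 1; split; rewrite ?mulmx1 ?flatmx0 ?lin1 ?mxE //.
    by move=> i; rewrite mxE ler01.
  by rewrite [y]mx11_scalar -lin1 y1 mul_mx_scalar scale1r.
have : 0 <= y ord0 ord0.
  by have := y_ge0 (Ordinal m_gt0); rewrite mxE big_ord1 mxE mul1r.
by rewrite lin1; split=> // y0; rewrite [y]mx11_scalar y0 mul_mx_scalar scale0r.
Qed.

Lemma cone_form_subsingleton (P : pset R n) m : (0 < m)%N ->
  (forall x y, P x -> P y -> x = y) -> cone_form P m.
Proof.
move=> m_gt0 P1; have [[p Pp]|P0] := pselect (exists p, P p).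
  by apply: cone_form_ext (cone_form_point p m_gt0) => x; split=> [->//|/P1]; apply.
by apply: cone_form_ext (cone_form_empty m) => x; split=> // Px; apply: P0; exists x.
Qed.

Lemma cone_form_and (P1 P2 : pset R n) m1 m2 :
  cone_form P1 m1 -> cone_form P2 m2 -> cone_form (fun x => P1 x /\ P2 x) (m1 + m2).
Proof.
move=> [d1 [A1 [k1 [E1 [l1 [T1 [PA1 bA1]]]]]]] [d2 [A2 [k2 [E2 [l2 [T2 [PA2 bA2]]]]]]].
pose E := col_mx (block_mx E1 0 0 E2) (col_mx (row_mx l1 (- l2)) (row_mx T1 (- T2))).
have EE y1 y2 : E *m col_mx y1 y2 = 0 <->
    [/\ E1 *m y1 = 0, E2 *m y2 = 0, lin l1 y1 = lin l2 y2 & T1 *m y1 = T2 *m y2].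
  rewrite mul_col_mx mul_block_diag_col mul_col_mx !mul_row_col !mulNmx.
  rewrite !col_mx_eq0P !subr_eq0P mx11_eqP.
  by split=> [[[? ?] [? ?]]|[? ? ? ?]].
have l_lin y1 y2 : lin (row_mx l1 0) (col_mx y1 y2) = lin l1 y1.
  by rewrite lin_row_col lin0l addr0.
have T_mul y1 y2 : row_mx T1 0 *m col_mx y1 y2 = T1 *m y1.
  by rewrite mul_row_col mul0mx addr0.
exists (d1 + d2)%N, (block_mx A1 0 0 A2), (k1 + k2 + (1 + n))%N, E,
  (row_mx l1 0), (row_mx T1 0); split=> [x|y]; last first.
  by rewrite -(vsubmxK y) mul_block_diag_col l_lin T_mul
    => /nonneg_col_mx[/bA1 + _] /EE[+ _ _ _]; apply.
split.
  move=> [/PA1 [y1 [A1y1 E1y1 l1y1 ->]] /PA2 [y2 [A2y2 E2y2 l2y2 x2]]].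
  exists (col_mx y1 y2); rewrite mul_block_diag_col l_lin T_mul; split=> //.
    exact/nonneg_col_mx.
  by apply/EE; split; rewrite ?l1y1 ?l2y2.
move=> [y []]; rewrite -(vsubmxK y) mul_block_diag_col l_lin T_mul.
move=> /nonneg_col_mx[A1y1 A2y2] /EE[E1y1 E2y2 l12 T12] l1y1 ->.
split; [apply/PA1; exists (usubmx y) | apply/PA2; exists (dsubmx y)] => //.
by rewrite -l12 -T12.
Qed.

Lemma cone_form_or (P1 P2 : pset R n) m1 m2 : cone_form P1 m1 -> cone_form P2 m2 ->
  cone_form (conv (fun x => P1 x \/ P2 x)) (m1 + m2).
Proof.
move=> [d1 [A1 [k1 [E1 [l1 [T1 [PA1 bA1]]]]]]] [d2 [A2 [k2 [E2 [l2 [T2 [PA2 bA2]]]]]]].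
exists (d1 + d2)%N, (block_mx A1 0 0 A2), (k1 + k2)%N, (block_mx E1 0 0 E2),
  (row_mx l1 l2), (row_mx T1 T2); split=> [x|y]; last first.
  rewrite -(vsubmxK y) !mul_block_diag_col lin_row_col mul_row_col.
  move=> /nonneg_col_mx[/bA1 + /bA2 +] /col_mx_eq0P[E1y1 E2y2].
  move=> /(_ E1y1)[a_ge0 aT] /(_ E2y2)[b_ge0 bT].
  split=> [|ab0]; first exact: addr_ge0.
  by rewrite aT ?bT ?addr0 //; lra.
split.
  apply: conv_cone_lift => z [/PA1|/PA2] [y' [Ay' Ey' ly' ->]].
    exists (col_mx y' 0); rewrite !mul_block_diag_col lin_row_col mul_row_col !mulmx0.
    rewrite Ey' col_mx0 lin0r ly' !addr0; split=> //.
    by apply/nonneg_col_mx; split=> // i; rewrite mxE.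
  exists (col_mx 0 y'); rewrite !mul_block_diag_col lin_row_col mul_row_col !mulmx0.
  rewrite Ey' col_mx0 lin0r ly' !add0r; split=> //.
  by apply/nonneg_col_mx; split=> // i; rewrite mxE.
move=> [y []]; rewrite -(vsubmxK y) !mul_block_diag_col lin_row_col mul_row_col.
set y1 := usubmx y; set y2 := dsubmx y.
move=> /nonneg_col_mx[A1y1 A2y2] /col_mx_eq0P[E1y1 E2y2] ab1 ->.
have [a_ge0 aT] := bA1 y1 A1y1 E1y1; have [b_ge0 bT] := bA2 y2 A2y2 E2y2.
have [a0|a_neq0] := eqVneq (lin l1 y1) 0.
  rewrite aT // add0r; apply: conv_mem; right; apply/PA2; exists y2; split=> //.
  by rewrite -ab1 a0 add0r.
have [b0|b_neq0] := eqVneq (lin l2 y2) 0.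
  rewrite bT // addr0; apply: conv_mem; left; apply/PA1; exists y1; split=> //.
  by rewrite -ab1 b0 addr0.
set a := lin l1 y1 in a_neq0 ab1 a_ge0 aT *; set b := lin l2 y2 in b_neq0 ab1 b_ge0 bT *.
have -> : T1 *m y1 + T2 *m y2 = a *: (T1 *m (a^-1 *: y1)) + b *: (T2 *m (b^-1 *: y2)).
  by rewrite -!scalemxAr !scalerA !mulfV // !scale1r.
apply: conv_comb2 => //.
- left; apply/PA1; exists (a^-1 *: y1).
  split=> //; rewrite ?linZ ?mulVf // -scalemxAr ?E1y1 ?scaler0 // => i.
  by rewrite mxE mulr_ge0 // invr_ge0.
- right; apply/PA2; exists (b^-1 *: y2).
  split=> //; rewrite ?linZ ?mulVf // -scalemxAr ?E2y2 ?scaler0 // => i.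
  by rewrite mxE mulr_ge0 // invr_ge0.
Qed.

Lemma ray_in_unit_interval (a g : R) : (forall t, 0 <= t -> 0 <= a + t * g <= 1) -> g = 0.
Proof.
move=> ray; have := ray 0 (lexx 0); rewrite mul0r addr0 => /andP[a_ge0 a_le1].
have [g_lt0|g_gt0|//] := ltgtP g 0.
  have t_ge0 : 0 <= 2 / - g by rewrite divr_ge0 // oppr_ge0 ltW.
  have := ray _ t_ge0.
  have -> : 2 / - g * g = -2 by field; rewrite (lt_eqF g_lt0).
  by case/andP => ? _; lra.
have t_ge0 : 0 <= 2 / g by rewrite divr_ge0 // ltW.
have := ray _ t_ge0.
have -> : 2 / g * g = 2 by field; rewrite (gt_eqF g_gt0).
by case/andP => _ ?; lra.
Qed.

Definition ext_lift d m (A : 'M[R]_(m, d)) (b : 'cV[R]_m) (T : 'M[R]_(n, d))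
  (t : pt R n) : pset R n :=
  fun x => exists y, (forall i, b i ord0 <= (A *m y) i ord0) /\ x = T *m y + t.

(* A polyhedron inside the unit cube is bounded, so its recession directions
   are mapped to [0]. *)
Lemma ext_lift_recession d m (A : 'M[R]_(m, d)) b T t (y w : 'cV[R]_d) :
  in_unit_cube (ext_lift A b T t) -> (forall i, b i ord0 <= (A *m y) i ord0) ->
  nonneg (A *m w) -> T *m w = 0.
Proof.
move=> cube Ay Aw; apply/matrixP => j k; rewrite (ord1 k) [RHS]mxE.
apply: (@ray_in_unit_interval ((T *m y + t) j ord0)) => s s_ge0.
have : ext_lift A b T t (T *m (y + s *: w) + t).
  exists (y + s *: w); split=> // r; rewrite mulmxDr -scalemxAr mxDE mxZE.
  by apply: le_trans (Ay r) _; rewrite lerDl mulr_ge0.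
by move/cube/(_ j); rewrite /Defs.coord mulmxDr -scalemxAr !mxDE mxZE addrAC.
Qed.

(* If the reversed system [A z <= b] is feasible, every feasible point
   differs from [z] by a recession direction. *)
Lemma ext_lift_reversed_point d m (A : 'M[R]_(m, d)) b T t (z : 'cV[R]_d) x :
  in_unit_cube (ext_lift A b T t) -> (forall r, (A *m z) r ord0 <= b r ord0) ->
  ext_lift A b T t x -> x = T *m z + t.
Proof.
move=> cube Az [w [Aw ->]]; congr (_ + _); apply/subr_eq0P; rewrite -mulmxBr.
apply: (ext_lift_recession cube Aw) => r.
by rewrite mulmxBr mxBE subr_ge0; apply: le_trans (Az r) (Aw r).
Qed.

Lemma cone_form_slice_nontrivial (Q : pset R n) d sigma (Aq : 'M[R]_(sigma, d)) bq Tq tq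
    i (v : R) x1 x2 :
  in_unit_cube Q -> (forall x, Q x <-> ext_lift Aq bq Tq tq x) ->
  Q x1 -> Q x2 -> x1 <> x2 -> cone_form (fun x => Q x /\ coord x i = v) sigma.
Proof.
move=> Q01 QA Qx1 Qx2 x12.
have cube : in_unit_cube (ext_lift Aq bq Tq tq) by move=> x /QA; apply: Q01.
have [w1 [Aw1 _]] := (QA x1).1 Qx1.
pose A := row_mx Aq (- bq).
pose E := row_mx (row i Tq) ((tq i ord0 - v)%:M : 'M[R]_1).
pose l := row_mx (0 : 'rV[R]_d) (1%:M : 'M[R]_1).
pose T := row_mx Tq tq.
have A_mul w a : A *m col_mx w a%:M = Aq *m w - a *: bq.
  by rewrite mul_row_col mulNmx mul_mx_scalar.
have E_mul w a : E *m col_mx w a%:M = 0 <-> (Tq *m w) i ord0 + (tq i ord0 - v) * a = 0.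
  rewrite mx11_eqP mul_row_col -row_mul -scalar_mxM; set u := Tq *m w.
  by rewrite !mxE eqxx mulr1n.
have l_lin w a : lin l (col_mx w a%:M) = a.
  by rewrite lin_row_col lin0l add0r /lin mul1mx mxE eqxx mulr1n.
have T_mul w a : T *m col_mx w a%:M = Tq *m w + a *: tq.
  by rewrite mul_row_col mul_mx_scalar.
have col_split (y : 'cV[R]_(d + 1)) : y = col_mx (usubmx y) (dsubmx y ord0 ord0)%:M.
  by rewrite -mx11_scalar vsubmxK.
exists (d + 1)%N, A, 1%N, E, l, T; split=> [x|y].
  split=> [[/QA [w [Aw ->]] xi]|[y []]].
    exists (col_mx w 1%:M); rewrite A_mul l_lin T_mul !scale1r; split=> //.
      by move=> r; rewrite mxBE subr_ge0.
    by apply/E_mul; move: xi; rewrite /Defs.coord mxDE; lra.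
  rewrite (col_split y) A_mul l_lin T_mul.
  set w := usubmx y; set a := dsubmx y ord0 ord0 => Aw /E_mul Ew a1 ->.
  rewrite a1 !scale1r in Aw Ew *; split.
    by apply/QA; exists w; split=> // r; have := Aw r; rewrite mxBE subr_ge0.
  by rewrite /Defs.coord mxDE; lra.
rewrite (col_split y) A_mul l_lin T_mul.
set w := usubmx y; set a := dsubmx y ord0 ord0 => Aw /E_mul Ew.
have a_ge0 : 0 <= a.
  rewrite leNgt; apply/negP => a_lt0; apply: x12.
  have Aw' r : (Aq *m (a^-1 *: w)) r ord0 <= bq r ord0.
    rewrite -scalemxAr mxZE ler_ndivrMl //.
    by have := Aw r; rewrite mxBE mxZE subr_ge0 mulrC.
  have [Qx1' Qx2'] := conj ((QA x1).1 Qx1) ((QA x2).1 Qx2).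
  by rewrite (ext_lift_reversed_point cube Aw' Qx1')
    (ext_lift_reversed_point cube Aw' Qx2').
split=> // a0; rewrite a0 scale0r addr0.
apply: (ext_lift_recession cube Aw1) => r.
by have := Aw r; rewrite a0 scale0r subr0.
Qed.

Lemma cone_form_slice (Q : pset R n) sigma i (v : R) :
  (0 < sigma)%N -> in_unit_cube Q -> has_ext_form Q sigma ->
  cone_form (fun x => Q x /\ coord x i = v) sigma.
Proof.
move=> sigma_gt0 Q01 [d [A [b [T [t QA]]]]].
have [[x1 [x2 [Qx1 Qx2 x12]]]|Q1] := pselect (exists x1 x2, [/\ Q x1, Q x2 & x1 <> x2]).
  exact: cone_form_slice_nontrivial QA Qx1 Qx2 x12.
apply: cone_form_subsingleton => // x y [Qx _] [Qy _].
by apply: contra_notP Q1 => xy; exists x, y.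
Qed.

(* The equations [E y = 0, l y = 1] are eliminated by writing [y = y0 + N z]
   with [N] a basis of the kernel of [col_mx E l]. *)
Lemma cone_form_ext_form (P : pset R n) m :
  (0 < m)%N -> cone_form P m -> has_ext_form P m.
Proof.
move=> m_gt0 [d [A [k [E [l [T [PA _]]]]]]].
have [[x0 /PA [y0 [Ay0 Ey0 ly0 _]]]|P0] := pselect (exists x, P x); last first.
  exists 1%N, 0, (const_mx 1), 0, 0 => x; split=> [Px|[y [y_ge _]]].
    by case: P0; exists x.
  by have := y_ge (Ordinal m_gt0); rewrite mul0mx !mxE ler10.
pose N := (kermx (col_mx E l)^T)^T.
have [EN lN] : E *m N = 0 /\ l *m N = 0.
  apply/col_mx_eq0P; rewrite -mul_col_mx; apply: trmx_inj.
  by rewrite trmx_mul trmxK mulmx_ker trmx0.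
exists d, (A *m N), (- (A *m y0)), (T *m N), (T *m y0) => x; split.
  move=> /PA [y [Ay Ey ly ->]].
  have : ((y - y0)^T <= kermx (col_mx E l)^T)%MS.
    apply/sub_kermxP; rewrite -trmx_mul mul_col_mx !mulmxBr Ey Ey0 subrr.
    have -> : l *m y - l *m y0 = 0.
      by apply/subr_eq0P/mx11_eqP; move: ly ly0; rewrite /lin => -> ->.
    by rewrite col_mx0 trmx0.
  case/submxP => D yD; exists D^T.
  have ND : N *m D^T = y - y0 by rewrite -trmx_mul -yD trmxK.
  rewrite -!mulmxA ND !mulmxBr subrK; split=> // r.
  by rewrite mxNE mxBE; have := Ay r; lra.
move=> [z [Az ->]]; apply/PA; exists (y0 + N *m z); split.
- by move=> r; rewrite mulmxDr mxDE mulmxA; have := Az r; rewrite mxNE; lra.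
- by rewrite mulmxDr Ey0 mulmxA EN mul0mx addr0.
- by rewrite linD ly0 /lin mulmxA lN mul0mx mxE addr0.
- by rewrite mulmxDr mulmxA addrC.
Qed.

Section BasicSolutions.
Variables (d m k : nat) (A : 'M[R]_(m, d)) (E : 'M[R]_(k, d)).
Variables (l : 'rV[R]_d) (T : 'M[R]_(n, d)).
Hypothesis bA : bounded_cone A E l T.
Implicit Types y z : 'cV[R]_d.

Definition feasible y := [/\ nonneg (A *m y), E *m y = 0 & lin l y = 1].
Definition tight y : {set 'I_m} := [set r | (A *m y) r ord0 == 0].
Definition keeps_tight y z :=
  [/\ forall r, r \in tight y -> (A *m z) r ord0 = 0, E *m z = 0 & lin l z = 0].
Definition basic y := feasible y /\ forall z, keeps_tight y z -> T *m z = 0.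

Lemma basic_image_tight y y' : basic y -> feasible y' -> tight y = tight y' ->
  T *m y = T *m y'.
Proof.
move=> [[_ Ey ly] yb] [_ Ey' ly'] yy'; apply/subr_eq0P; rewrite -mulmxBr.
apply: yb; split.
- move=> r ry; have := ry; rewrite yy'; move: ry.
  by rewrite !inE mulmxBr mxBE => /eqP -> /eqP ->; rewrite subrr.
- by rewrite mulmxBr Ey Ey' subrr.
- by rewrite linD linN ly ly' subrr.
Qed.

(* Move from [y] along [z] until a new row becomes tight; [z] must decrease
   some row, since otherwise it lies in the cone with [l z = 0] and [T z != 0]. *)
Lemma tighten y z : feasible y -> keeps_tight y z -> T *m z != 0 ->
  exists2 t, 0 < t & feasible (y + t *: z) /\ (#|tight y| < #|tight (y + t *: z)|)%N.
Proof.
move=> [Ay Ey ly] [zt Ez lz] Tz.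
have [r0 Az_r0] : exists r, (A *m z) r ord0 < 0.
  apply: contra_notP (elimN eqP Tz) => Az_ge0.
  apply: (bA _ Ez).2 lz => r; rewrite leNgt; apply/negP => ?.
  by apply: Az_ge0; exists r.
have Amul r t : (A *m (y + t *: z)) r ord0 = (A *m y) r ord0 + t * (A *m z) r ord0.
  by rewrite mulmxDr -scalemxAr mxDE mxZE.
pose ratio r := (A *m y) r ord0 / - (A *m z) r ord0.
have [rs Az_rs rs_min] := arg_minP (P := fun r => (A *m z) r ord0 < 0) ratio Az_r0.
have rs_nt : rs \notin tight y.
  by apply/negP => /zt Az0; move: Az_rs; rewrite Az0 ltxx.
have Ay_rs : 0 < (A *m y) rs ord0.
  by rewrite lt_def Ay andbT; move: rs_nt; rewrite inE.
exists (ratio rs); first by rewrite divr_gt0 // oppr_gt0.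
split; first split.
- move=> r; rewrite Amul; have [Az_r|Az_r] := lerP 0 ((A *m z) r ord0).
    by rewrite addr_ge0 // mulr_ge0 // divr_ge0 ?oppr_ge0 ?Ay // ltW.
  have := rs_min r Az_r; rewrite {2}/ratio ler_pdivlMr ?oppr_gt0 // mulrN.
  by have := Ay r; lra.
- by rewrite mulmxDr -scalemxAr Ez Ey scaler0 addr0.
- by rewrite linD linZ lz ly mulr0 addr0.
apply/proper_card/properP; split.
  apply/subsetP => r rt; have := zt r rt; move: rt.
  by rewrite !inE Amul => /eqP -> ->; rewrite mulr0 addr0.
exists rs => //; rewrite inE Amul /ratio; apply/eqP.
by field; rewrite lt_eqF.
Qed.

Lemma nonbasic_split y : feasible y -> ~ basic y ->
  exists y1 y2 a, [/\ feasible y1, feasible y2, (#|tight y| < #|tight y1|)%N,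
    (#|tight y| < #|tight y2|)%N &
    0 <= a <= 1 /\ T *m y = a *: (T *m y1) + (1 - a) *: (T *m y2)].
Proof.
move=> fy nby.
have [z [zt Tz]] : exists z, keeps_tight y z /\ T *m z != 0.
  apply: contra_notP nby => zT; split=> // z zt.
  by apply/eqP; apply: contra_notT zT => Tz; exists z.
have [t1 t1_gt0 [fy1 ty1]] := tighten fy zt Tz.
have [t2 t2_gt0 [fy2 ty2]] : exists2 t, 0 < t &
    feasible (y + t *: - z) /\ (#|tight y| < #|tight (y + t *: - z)|)%N.
  apply: tighten; rewrite ?mulmxN ?oppr_eq0 //.
  case: zt => zt Ez lz; split; rewrite ?mulmxN ?Ez ?linN ?lz ?oppr0 // => r /zt.
  by rewrite mxNE => ->; rewrite oppr0.
exists (y + t1 *: z), (y + t2 *: - z), (t2 / (t1 + t2)); split=> //.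
have t12 : 0 < t1 + t2 by rewrite addr_gt0.
split.
  rewrite divr_ge0 ?(ltW t2_gt0) ?(ltW t12) //=.
  by rewrite ler_pdivrMr // mul1r lerDr ltW.
rewrite !mulmxDr -!scalemxAr mulmxN; apply/matrixP => i j.
rewrite !(mxDE, mxZE, mxNE); field.
by rewrite gt_eqF.
Qed.

Section Hull.
Variables (K : nat) (pts : 'I_K -> pt R n).

Definition in_hull x := exists w : 'I_K -> R,
  [/\ forall j, 0 <= w j, \sum_j w j = 1 & x = \sum_j w j *: pts j].

Lemma in_hull_pt j : in_hull (pts j).
Proof.
exists (fun j' => (j' == j)%:R); split=> [j'||]; first by rewrite ler0n.
  by rewrite (bigD1 j) //= eqxx big1 ?addr0 // => j' /negbTE ->.
by rewrite (bigD1 j) //= eqxx scale1r big1 ?addr0 // => j' /negbTE ->; rewrite scale0r.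
Qed.

Lemma in_hull_comb x1 x2 a : in_hull x1 -> in_hull x2 -> 0 <= a <= 1 ->
  in_hull (a *: x1 + (1 - a) *: x2).
Proof.
move=> [w1 [w1_ge0 w11 ->]] [w2 [w2_ge0 w21 ->]] /andP[a_ge0 a_le1].
exists (fun j => a * w1 j + (1 - a) * w2 j); split.
- by move=> j; rewrite addr_ge0 // mulr_ge0 // subr_ge0.
- by rewrite big_split /= -!mulr_sumr w11 w21 !mulr1 addrC subrK.
- rewrite !scaler_sumr -big_split; apply: eq_bigr => j _.
  by rewrite !scalerA scalerDl.
Qed.

Lemma in_hull_conv x : in_hull x -> conv (fun p => exists j, p = pts j) x.
Proof.
move=> [w [w_ge0 w1 ->]]; exists K, pts, w.
by split=> // j; exists j.
Qed.

End Hull.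

Lemma feasible_in_hull (pts : 'I_#|{set 'I_m}| -> pt R n) :
  (forall y, basic y -> T *m y = pts (enum_rank (tight y))) ->
  forall y, feasible y -> in_hull pts (T *m y).
Proof.
move=> pts_basic y; move: {2}(m - #|tight y|)%N (leqnn (m - #|tight y|)) => N.
have tight_le y' : (#|tight y'| <= m)%N by rewrite -[m in (_ <= m)%N]card_ord max_card.
elim: N y => [|N IH] y Ny fy; have [by_|nby] := pselect (basic y);
  try by rewrite pts_basic //; exact: in_hull_pt.
  by have [y1 [_ [_ [_ _ ty1 _ _]]]] := nonbasic_split fy nby; have := tight_le y1; lia.
have [y1 [y2 [a [fy1 fy2 ty1 ty2 [a01 ->]]]]] := nonbasic_split fy nby.
by apply: in_hull_comb => //; apply: IH => //; lia.
Qed.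

Lemma basic_points : (exists y, feasible y) ->
  exists pts : 'I_#|{set 'I_m}| -> pt R n,
  (forall j, cone_lift A E l T (pts j)) /\
  (forall y, basic y -> T *m y = pts (enum_rank (tight y))).
Proof.
move=> [y0 fy0].
have pick (j : 'I_#|{set 'I_m}|) : exists p, cone_lift A E l T p /\
    forall y, basic y -> tight y = enum_val j -> T *m y = p.
  have [[y [by_ ty]]|] := pselect (exists y, basic y /\ tight y = enum_val j).
    exists (T *m y); split=> [|y' by' ty'].
      by case: by_ => -[Ay Ey ly] _; exists y.
    by apply: (basic_image_tight by'); [case: by_ | rewrite ty ty'].
  move=> nb; exists (T *m y0); split=> [|y by_ ty]; first by case: fy0; exists y0.
  by case: nb; exists y.
have [pts ptsP] := choice pick; exists pts; split=> [j|y by_]; first exact: (ptsP j).1.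
by apply: (ptsP _).2; rewrite ?enum_rankK.
Qed.

Lemma cone_lift_polytope : polytope (cone_lift A E l T).
Proof.
have [[y0 fy0]|] := pselect (exists y, feasible y); last first.
  move=> nf; exists 0%N, (fun _ => 0) => x; split=> [[y [Ay Ey ly _]]|].
    by case: nf; exists y.
  move=> [[|K] [p [w [p0 [_ [w1 _]]]]]]; last by have [[]] := p0 ord0.
  by move: w1; rewrite big_ord0 => /eqP; rewrite eq_sym oner_eq0.
have [pts [pts_lift pts_basic]] := basic_points (ex_intro _ y0 fy0).
exists #|{set 'I_m}|, pts => x; split.
  by move=> [y [Ay Ey ly ->]]; apply/in_hull_conv/(feasible_in_hull pts_basic).
by apply: conv_cone_lift => _ [j ->].
Qed.

End BasicSolutions.

Lemma cone_form_polytope (P : pset R n) m : cone_form P m -> polytope P.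
Proof.
move=> [d [A [k [E [l [T [PA bA]]]]]]].
have [K [p Ap]] := cone_lift_polytope bA.
by exists K, p => x; rewrite PA.
Qed.

Lemma cone_form_phiQ (Q : pset R n) sigma : (0 < sigma)%N -> in_unit_cube Q ->
  has_ext_form Q sigma -> forall psi, cone_form (phiQ Q psi) (fsize psi * sigma).
Proof.
move=> sigma_gt0 Q01 QA.
elim=> [i|p _|p IHp q IHq|p IHp q IHq] /=.
- by rewrite mul1n; exact: cone_form_slice.
- case: p => [i|p|p q|p q]; try exact: cone_form_empty.
  by rewrite mul1n; exact: cone_form_slice.
- by rewrite mulnDl; exact: (cone_form_and IHp IHq).
- by rewrite mulnDl; exact: (cone_form_or IHp IHq).
Qed.

End ConeForm.

Lemma fsize_gt0 n (psi : formula n) : (0 < fsize psi)%N.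
Proof. by elim: psi => [i|p IH|p IHp q IHq|p IHp q IHq] //=; rewrite addn_gt0 IHp. Qed.

Theorem theorem4p4 (R : realType) (n : nat) (phi : formula n) (Q : pset R n) :
  reduced phi ->
  convex Q -> in_unit_cube Q -> set_incl (@formula_set R n phi) Q ->
  (forall nu : nat,
     satisfies_notch_valid Q (@formula_set R n phi) nu ->
     satisfies_notch_valid (phiQ Q phi) (@formula_set R n phi) nu.+1) /\
  (forall sigma : nat, (0 < sigma)%N ->
     polytope Q -> has_ext_form Q sigma ->
     polytope (phiQ Q phi) /\ has_ext_form (phiQ Q phi) (fsize phi * sigma)).
Proof.
(* Reducedness is built into [phiQ], which is empty on other negations, and
   boundedness comes from [in_unit_cube Q]. *)
move=> _ _ Q01 _; split; first exact: phiQ_notch.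
move=> sigma sigma_gt0 _ QA.
have phiQ_cone := cone_form_phiQ sigma_gt0 Q01 QA phi.
split; first exact: cone_form_polytope phiQ_cone.
by apply: cone_form_ext_form phiQ_cone; rewrite muln_gt0 fsize_gt0.
Qed.
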